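(* A $\mathsf{CK}$-frame $\mathcal{X}=(X,e,\le,R)$ validates $(\Diamond p\to\Box q)\to\Box(p\to q)$ (for distinct propositional variables $p,q$) if and only if it satisfies ($\mathsf{I}_{\Diamond\Box}$-corr): for all $x,y,z\in X$, if $xRy$, $y\le z$ and $z\neq e$, then there exist $u,w$ with $x\le u$, $uRw$, $w\le z$, such that for every $s$ with $u\le s$, either $sRe$ or there is $t$ with $sRt$ and $z\le t$.
   Context: A $\mathsf{CK}$-frame is a tuple $(X,e,\le,R)$ where $(X,\le)$ is a preorder, $e\in X$ is a maximal element of $(X,\le)$, and $R$ is a binary relation on $X$ with $eRx$ iff $x=e$. A valuation assigns to each propositional variable $p$ an upset $V(p)$ with $e\in V(p)$. Forcing: $x\Vdash p$ iff $x\in V(p)$; $x\Vdash\bot$ iff $x=e$; $\wedge,\vee$ pointwise; $x\Vdash\varphi\to\psi$ iff for all $y\ge x$, $y\Vdash\varphi$ implies $y\Vdash\psi$; $x\Vdash\Box\varphi$ iff for all $y,z$ with $x\le y$ and $yRz$, $z\Vdash\varphi$; $x\Vdash\Diamond\varphi$ iff for all $y\ge x$ there is $z$ with $yRz$ and $z\Vdash\varphi$. A frame validates a formula if it is forced at every world under every valuation. *)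

Record CKframe := {
  world :> Type;
  fallible : world;
  le : world -> world -> Prop;
  rel : world -> world -> Prop;
  le_refl : forall x, le x x;
  le_trans : forall x y z, le x y -> le y z -> le x z;
  fallible_max : forall x, le fallible x -> x = fallible;
  fallible_rel : forall x, rel fallible x <-> x = fallible
}.

Inductive form : Type :=
| Var : nat -> form
| Bot : form
| And : form -> form -> form
| Or : form -> form -> form
| Imp : form -> form -> form
| Box : form -> form
| Dia : form -> form.

Definition valuation (F : CKframe) (V : nat -> F -> Prop) : Prop :=
  forall p, V p (fallible F) /\ (forall x y, le F x y -> V p x -> V p y).

Fixpoint forces (F : CKframe) (V : nat -> F -> Prop) (x : F) (phi : form) : Prop :=
  match phi with
  | Var p => V p x
  | Bot => x = fallible F
  | And a b => forces F V x a /\ forces F V x b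
  | Or a b => forces F V x a \/ forces F V x b
  | Imp a b => forall y, le F x y -> forces F V y a -> forces F V y b
  | Box a => forall y z, le F x y -> rel F y z -> forces F V z a
  | Dia a => forall y, le F x y -> exists z, rel F y z /\ forces F V z a
  end.

Definition validates (F : CKframe) (phi : form) : Prop :=
  forall V, valuation F V -> forall x : F, forces F V x phi.

Definition I_DiaBox_corr (F : CKframe) : Prop :=
  forall x y z : F, rel F x y -> le F y z -> z <> fallible F ->
    exists u w : F, le F x u /\ rel F u w /\ le F w z /\
      (forall s : F, le F u s ->
         rel F s (fallible F) \/ exists t : F, rel F s t /\ le F z t).

(* Soundness: persistence and the fact that e forces everything reduce the claim to the
   case of a non-fallible world z above an R-successor of x, where the correspondence
   condition provides u, w; every world above u sees e or a world above z, so u forces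
   Dia p, hence Box q, and w, lying below z, forces q.
   Completeness: interpret p as the upset of z (plus e) and q as the set of worlds lying
   above some R-successor w of some u >= x satisfying the condition on u; then x forces
   Dia p -> Box q by construction, and the validated formula puts z in the set for q. *)

From Stdlib Require Import Classical_Prop.

Section CKframe_semantics.

Variable F : CKframe.

Definition upset (A : F -> Prop) : Prop :=
  A (fallible F) /\ (forall x y, le F x y -> A x -> A y).

Lemma valuation_pair (A B : F -> Prop) :
  upset A -> upset B -> valuation F (fun n => match n with 0 => A | _ => B end).
Proof. intros HA HB [|n]; assumption. Qed.

Lemma forces_upward V phi (x y : F) :
  valuation F V -> le F x y -> forces F V x phi -> forces F V y phi.
Proof.
  intros HV Hxy; revert x y Hxy.
  induction phi as [p| |a IHa b IHb|a IHa b IHb|a _ b _|a _|a _]; simpl;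
    intros x y Hxy Hx.
  - exact (proj2 (HV p) x y Hxy Hx).
  - subst x; exact (fallible_max F y Hxy).
  - destruct Hx; split; eauto.
  - destruct Hx; [left | right]; eauto.
  - intros y' Hyy'; apply Hx; exact (le_trans F _ _ _ Hxy Hyy').
  - intros y' z Hyy'; apply Hx; exact (le_trans F _ _ _ Hxy Hyy').
  - intros y' Hyy'; apply Hx; exact (le_trans F _ _ _ Hxy Hyy').
Qed.

Lemma fallible_forces V phi : valuation F V -> forces F V (fallible F) phi.
Proof.
  intros HV; induction phi as [p| |a IHa b IHb|a IHa b IHb|a _ b IHb|a IHa|a IHa];
    simpl.
  - exact (proj1 (HV p)).
  - reflexivity.
  - split; assumption.
  - left; assumption.
  - intros y Hy _; rewrite (fallible_max F y Hy); exact IHb.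
  - intros y z Hy Hyz; rewrite (fallible_max F y Hy) in Hyz.
    rewrite (proj1 (fallible_rel F z) Hyz); exact IHa.
  - intros y Hy; rewrite (fallible_max F y Hy).
    exists (fallible F); split; [apply fallible_rel; reflexivity | exact IHa].
Qed.

Definition reaches_above (u z : F) : Prop :=
  forall s, le F u s -> rel F s (fallible F) \/ exists t, rel F s t /\ le F z t.

Lemma reaches_above_forces_Dia V phi (u z : F) :
  valuation F V -> reaches_above u z -> forces F V z phi -> forces F V u (Dia phi).
Proof.
  intros HV Hreach Hz s Hus; destruct (Hreach s Hus) as [Hse | (t & Hst & Hzt)].
  - exists (fallible F); split; [exact Hse | exact (fallible_forces V phi HV)].
  - exists t; split; [exact Hst | exact (forces_upward V phi z t HV Hzt Hz)].
Qed.

Theorem I_DiaBox_corr_sound phi psi :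
  I_DiaBox_corr F -> validates F (Imp (Imp (Dia phi) (Box psi)) (Box (Imp phi psi))).
Proof.
  intros Hcorr V HV x x' Hxx' Hpre y z Hx'y Hyz z' Hzz' Hz'.
  destruct (classic (z' = fallible F)) as [-> | Hne].
  { exact (fallible_forces V psi HV). }
  destruct (Hcorr y z z' Hyz Hzz' Hne) as (u & w & Hyu & Huw & Hwz' & Hreach).
  assert (Hu : forces F V u (Dia phi))
    by exact (reaches_above_forces_Dia V phi u z' HV Hreach Hz').
  assert (Hx'u : le F x' u) by exact (le_trans F _ _ _ Hx'y Hyu).
  apply (forces_upward V psi w z' HV Hwz').
  exact (Hpre u Hx'u Hu u w (le_refl F u) Huw).
Qed.

Definition up_or_fallible (z v : F) : Prop := le F z v \/ v = fallible F.

Definition corr_region (x z v : F) : Prop :=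
  v = fallible F \/
  exists u w, le F x u /\ rel F u w /\ le F w v /\ reaches_above u z.

Lemma up_or_fallible_upset (z : F) : upset (up_or_fallible z).
Proof.
  split; [right; reflexivity |].
  intros a b Hab [Hza | ->].
  - left; exact (le_trans F _ _ _ Hza Hab).
  - right; exact (fallible_max F b Hab).
Qed.

Lemma corr_region_upset (x z : F) : upset (corr_region x z).
Proof.
  split; [left; reflexivity |].
  intros a b Hab [-> | (u & w & Hxu & Huw & Hwa & Hreach)].
  - left; exact (fallible_max F b Hab).
  - right; exists u, w; repeat split; try assumption.
    exact (le_trans F _ _ _ Hwa Hab).
Qed.

Theorem I_DiaBox_corr_complete :
  validates F (Imp (Imp (Dia (Var 0)) (Box (Var 1))) (Box (Imp (Var 0) (Var 1)))) ->
  I_DiaBox_corr F.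
Proof.
  intros Hvalid x y z Hxy Hyz Hz.
  set (V := fun n => match n with 0 => up_or_fallible z | _ => corr_region x z end).
  assert (HV : valuation F V)
    by exact (valuation_pair _ _ (up_or_fallible_upset z) (corr_region_upset x z)).
  assert (Hpre : forces F V x (Imp (Dia (Var 0)) (Box (Var 1)))).
  { intros u Hxu Hdia u' w Huu' Hu'w; right; exists u', w.
    repeat split; [exact (le_trans F _ _ _ Hxu Huu') | exact Hu'w | apply le_refl |].
    intros s Hu's; destruct (Hdia s (le_trans F _ _ _ Huu' Hu's))
      as (t & Hst & [Hzt | ->]).
    - right; exists t; split; assumption.
    - left; exact Hst. }
  destruct (Hvalid V HV x x (le_refl F x) Hpre x y (le_refl F x) Hxy z Hyz
              (or_introl (le_refl F z))) as [He | Hregion].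
  - contradiction.
  - exact Hregion.
Qed.

End CKframe_semantics.

Theorem mainTheorem8 (F : CKframe) :
  validates F (Imp (Imp (Dia (Var 0)) (Box (Var 1))) (Box (Imp (Var 0) (Var 1))))
  <-> I_DiaBox_corr F.
Proof.
  split.
  - apply I_DiaBox_corr_complete.
  - apply I_DiaBox_corr_sound.
Qed.
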